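(* Let $n,m\in\mathbb N$, $d:=\min\{n,m\}$, $\alpha\in[1,d]$, and $\mathcal S_\alpha:=\{xx^\ast:x\in\mathcal V_\alpha\}$. Then $\mathsf K_\alpha=\mathrm{cone}(\mathcal S_\alpha)$, i.e. the convex cone generated by $\mathcal S_\alpha$ is already closed.
   Context: For $\psi=\sum_{i,j}a_{ij}e_i\otimes f_j\in\mathbb C^n\otimes\mathbb C^m$, its Schmidt coefficients $s_1(\psi)\ge\dots\ge s_d(\psi)\ge0$ are the singular values of $[a_{ij}]$. For $\alpha\in[1,d]$ with $k=\lfloor\alpha\rfloor$, $\theta=\alpha-k$, $r=\lceil\alpha\rceil$, a unit vector $\psi$ is $\alpha$-admissible if $s_j(\psi)=0$ for $j\ge r+1$ and, when $\theta>0$, $s_{k+1}(\psi)\le\frac\theta k\sum_{j=1}^ks_j(\psi)$; $\mathcal V_\alpha$ is the set of these. $\mathrm{cone}(S)$ denotes the set of finite nonnegative combinations of elements of $S$, and $\mathsf K_\alpha$ is defined as the closure of $\mathrm{cone}(\mathcal S_\alpha)$. *)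

(* Complex numbers are R[i] (mathcomp
   real_closed `complex`) over an arbitrary R : realType, with the metric
   topology induced by the modulus; matrices carry the (product) topology of
   mathcomp-analysis. *)
From HB Require Import structures.
From mathcomp Require Import all_boot all_order all_algebra.
From mathcomp Require Import complex.
From mathcomp Require Import all_classical all_reals topology normedtype.
Import Order.TTheory GRing.Theory Num.Theory.
Import numFieldNormedType.Exports.

Set Implicit Arguments.
Unset Strict Implicit.
Unset Printing Implicit Defensive.

Local Open Scope ring_scope.
Local Open Scope classical_set_scope.

HB.instance Definition _ (R : realType) := PseudoPointedMetric.copy R[i] (R[i])^o.

Section Schmidt.
Variable R : realType.
Local Notation C := (R[i]).

(* psi = \sum_{ij} a_ij e_i (x) f_j in C^n (x) C^m is represented by its
   coefficient matrix a : 'M[C]_(n, m). *)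

Definition unit_tensor n m (a : 'M[C]_(n, m)) : Prop :=
  \sum_(i < n) \sum_(j < m) `|a i j| ^+ 2 = 1.

(* s (indexed 0 .. d-1, d = min n m) is the nonincreasing list of singular
   values of a: s_j >= 0, nonincreasing, and the s_j^2 (together with n - d
   zeros) are the eigenvalues, with multiplicity, of a a^*. *)
Definition schmidt_coeffs n m (a : 'M[C]_(n, m)) (s : 'I_(minn n m) -> R) : Prop :=
  [/\ forall j, 0 <= s j,
      forall i j : 'I_(minn n m), (i <= j)%N -> s j <= s i &
      char_poly (a *m (map_mx Num.conj a)^T)
        = \prod_(j < minn n m) ('X - ((s j) ^+ 2 +i* 0)%C%:P) * 'X^(n - minn n m)].

(* alpha-admissible unit vectors V_alpha.
   k = floor alpha, theta = alpha - k, r = ceil alpha; 1-based index j >= r+1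
   becomes 0-based index j >= r, and s_{k+1} becomes s_k (0-based). *)
Definition admissible n m (alpha : R) (a : 'M[C]_(n, m)) : Prop :=
  let k := Num.truncn alpha in
  let theta := alpha - k%:R in
  unit_tensor a /\
  exists s : 'I_(minn n m) -> R,
    [/\ schmidt_coeffs a s,
        forall j : 'I_(minn n m), (Num.ceil alpha <= (j : nat)%:Z)%R -> s j = 0 &
        0 < theta ->
        forall j : 'I_(minn n m), (j : nat) = k ->
          s j <= theta / k%:R * \sum_(i < minn n m | (i < k)%N) s i].

Definition V_alpha n m (alpha : R) : set 'M[C]_(n, m) := [set a | admissible alpha a].

(* x x^* as an operator on C^n (x) C^m = C^(n*m) (vectorised via mxvec). *)
Definition outer n m (a : 'M[C]_(n, m)) : 'M[C]_(n * m) :=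
  let v := (mxvec a)^T in v *m (map_mx Num.conj v)^T.

Definition S_alpha n m (alpha : R) : set 'M[C]_(n * m) :=
  [set outer a | a in @V_alpha n m alpha].

Definition cone N (S : set 'M[C]_N) : set 'M[C]_N :=
  [set M | exists (p : nat) (c : 'I_p -> R) (X : 'I_p -> 'M[C]_N),
     [/\ forall i, 0 <= c i, forall i, S (X i) &
         M = \sum_(i < p) (c i +i* 0)%C *: X i]].

Definition K_alpha n m (alpha : R) : set 'M[C]_(n * m) :=
  closure (cone (@S_alpha n m alpha)).

End Schmidt.

From HB Require Import structures.
From mathcomp Require Import all_boot all_order all_algebra.
From mathcomp Require Import complex lra zify.
From mathcomp Require Import all_classical all_reals topology normedtype.
Import Order.TTheory GRing.Theory Num.Theory.
Import numFieldNormedType.Exports.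
Import ArrowAsProduct.

Set Implicit Arguments.
Unset Strict Implicit.
Unset Printing Implicit Defensive.

Local Open Scope ring_scope.
Local Open Scope classical_set_scope.
Local Open Scope complex_scope.

(* Matrices in 'M[C]_N form a real vector space of dimension 2 N^2, so by
   Caratheodory every element of the cone is a conic combination of exactly
   2 N^2 elements of S_alpha.  Each x x^* with x a unit vector has
   trace 1, hence a combination of trace < B has all its coefficients in
   [0, B].  Adding the Schmidt coefficients to the parameters, S_alpha is the
   continuous image of a compact set, so the combinations with coefficients in
   [0, B] form a compact, hence closed, subset of the cone, and it contains
   every element of the cone of trace < B.  A point of the closure of the cone
   has a neighbourhood of trace < B, so it lies in the closure of that subset,
   i.e. in the subset itself. *)

Section Continuity.
Variable T : topologicalType.

Lemma continuous_mx (U : topologicalType) a b (f : T -> 'M[U]_(a, b)) :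
  (forall i j, continuous (fun w => f w i j)) -> continuous f.
Proof.
move=> cf x A [P nP PA].
have : \forall w \near x, forall ij : 'I_a * 'I_b, P ij.1 ij.2 (f w ij.1 ij.2).
  by apply: filter_forall => -[i j]; exact: cf.
by apply: filterS => w Pw; apply: PA => i j; exact: (Pw (i, j)).
Qed.

Lemma continuous_sum (K : numFieldType) (V : normedModType K) (I : Type)
    (r : seq I) (P : pred I) (F : I -> T -> V) :
  (forall i, continuous (F i)) ->
  continuous (fun w => \sum_(i <- r | P i) F i w).
Proof.
move=> cF; elim: r => [|i r IHr] w.
  by under eq_fun do rewrite big_nil; exact: cvg_cst.
under eq_fun do rewrite big_cons; case: (P i); last exact: IHr.
exact: (continuousD (cF i w) (IHr w)).
Qed.

Lemma closed_forall (I : Type) (P : I -> set T) :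
  (forall i, closed (P i)) -> closed [set w | forall i, P i w].
Proof.
move=> cP; rewrite (_ : [set w | _] = \bigcap_i P i); first exact: closed_bigI.
by apply/seteqP; split=> w Pw i //; exact: Pw.
Qed.

Lemma closed_implies (Q : Prop) (P : set T) : closed P -> closed [set w | Q -> P w].
Proof.
move=> cP; have [q|nq] := pselect Q.
  by rewrite (_ : [set w | _] = P) //; apply/seteqP; split=> [w /(_ q) | w Pw _].
by rewrite (_ : [set w | _] = setT) ?closedT //; apply/seteqP; split=> // w _ /nq.
Qed.

Lemma closed_eq_fun (K : numFieldType) (f g : T -> K) :
  continuous f -> continuous g -> closed [set w | f w = g w].
Proof.
move=> cf cg; have -> : [set w | f w = g w] = (f \- g) @^-1` [set 0].
  by apply/seteqP; split => w /=; [move=> ->; rewrite subrr | move/subr0_eq].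
apply: (continuous_closedP _).1; first by move=> w; exact: (continuousB (cf w) (cg w)).
apply: compact_closed; last exact: compact_set1.
exact: (@norm_hausdorff _ K^o).
Qed.

Lemma closed_le_fun (R : realFieldType) (f g : T -> R) :
  continuous f -> continuous g -> closed [set w | f w <= g w].
Proof.
move=> cf cg; have -> : [set w | f w <= g w] = (f \- g) @^-1` [set x | x <= 0].
  by apply/seteqP; split => w /=; rewrite subr_le0.
apply: (continuous_closedP _).1; last exact: closed_le.
by move=> w; exact: (continuousB (cf w) (cg w)).
Qed.

End Continuity.

Section ComplexContinuity.
Variable R : realType.
Local Notation C := R[i].

Lemma continuous_real_complex : continuous (fun x : R => x%:C).
Proof.
move=> x; apply/(@cvgrPdist_lt _ C^o) => e e0.
have /andP[/eqP Ime Ree] : (complex.Im e == 0) && (0 < complex.Re e).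
  by move: e0; rewrite ltcE.
have : \forall y \near x, `|x - y| < complex.Re e.
  by move/cvgrPdist_lt : (@cvg_id _ (nbhs x)) => /(_ _ Ree).
apply: filterS => y xy.
rewrite -rmorphB /= normc_def /= expr0n /= addr0 sqrtr_sqr ltcE /= Ime.
by rewrite eqxx xy.
Qed.

Lemma continuous_Re : continuous (@complex.Re R).
Proof.
move=> z; apply/(@cvgrPdist_lt _ R^o _ _ (nbhs_filter z)) => e e0.
have := (@cvgrPdist_lt _ C^o _ (nbhs z) (nbhs_filter z) id z).1 cvg_id e%:C.
rewrite ltcR => /(_ e0).
apply: filterS => y zy; rewrite -ltcR.
have -> : complex.Re z - complex.Re y = complex.Re (z - y) by case: z {zy}; case: y.
exact: le_lt_trans (normc_ge_Re _) zy.
Qed.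

Lemma continuous_conjc : continuous (@conjc R).
Proof.
move=> z; apply/(@cvgrPdist_lt _ C^o _ _ (nbhs_filter z)) => e e0.
have := (@cvgrPdist_lt _ C^o _ (nbhs z) (nbhs_filter z) id z).1 cvg_id e e0.
by apply: filterS => y zy; rewrite -rmorphB normcJ.
Qed.

Lemma continuous_complex (T : topologicalType) (f g : T -> R) :
  continuous f -> continuous g -> continuous (fun w => f w +i* g w).
Proof.
move=> cf cg w.
have -> : (fun w => f w +i* g w) = (fun w => (f w)%:C + 'i * (g w)%:C).
  by apply: funext => v; apply/eqP; rewrite eq_complex /=; simpc.
have cfC := continuous_comp (cf w) (@continuous_real_complex _).
have cgC := continuous_comp (cg w) (@continuous_real_complex _).
exact: (@continuousD _ C^o _ _ _ w cfC (continuousM (cvg_cst 'i) cgC)).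
Qed.

End ComplexContinuity.

Section PolyContinuity.
Variables (R : realType) (T : topologicalType).
Local Notation C := R[i].

Definition coef_continuous (p : T -> {poly C}) :=
  forall k, continuous (fun w => (p w)`_k).

Lemma coef_continuous_cst q : coef_continuous (fun=> q).
Proof. by move=> k w; exact: cvg_cst. Qed.

Lemma coef_continuousC (z : T -> C) :
  continuous z -> coef_continuous (fun w => (z w)%:P).
Proof.
move=> cz k; have -> : (fun w => (z w)%:P`_k) = fun w => if k == 0%N then z w else 0.
  by apply: funext => w; rewrite coefC.
by case: (k == 0%N); [exact: cz | move=> w; exact: cvg_cst].
Qed.

Lemma coef_continuousD p q : coef_continuous p -> coef_continuous q ->
  coef_continuous (fun w => p w + q w).
Proof.
move=> cp cq k w; under eq_fun do rewrite coefD.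
exact: (@continuousD _ C^o _ _ _ w (cp k w) (cq k w)).
Qed.

Lemma coef_continuousN p : coef_continuous p -> coef_continuous (fun w => - p w).
Proof.
move=> cp k w; under eq_fun do rewrite coefN.
exact: (@continuousN _ C^o _ _ w (cp k w)).
Qed.

Lemma coef_continuousM p q : coef_continuous p -> coef_continuous q ->
  coef_continuous (fun w => p w * q w).
Proof.
move=> cp cq k; under eq_fun do rewrite coefM.
apply: (@continuous_sum _ _ C^o) => j w.
exact: (@continuousM _ _ (fun w => (p w)`_j) (fun w => (q w)`_(k - j)) w (cp _ w) (cq _ w)).
Qed.

Lemma coef_continuous_sum (I : Type) (r : seq I) (F : I -> T -> {poly C}) :
  (forall i, coef_continuous (F i)) -> coef_continuous (fun w => \sum_(i <- r) F i w).
Proof.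
move=> cF k; under eq_fun do rewrite coef_sum.
by apply: (@continuous_sum _ _ C^o) => i; exact: cF.
Qed.

Lemma coef_continuous_prod (I : Type) (r : seq I) (F : I -> T -> {poly C}) :
  (forall i, coef_continuous (F i)) -> coef_continuous (fun w => \prod_(i <- r) F i w).
Proof.
move=> cF; elim: r => [|i r IHr].
  by under eq_fun do rewrite big_nil; exact: coef_continuous_cst.
under eq_fun do rewrite big_cons.
exact: (@coef_continuousM (F i) (fun w => \prod_(j <- r) F j w) (cF i) IHr).
Qed.

Lemma coef_continuous_det n (A : T -> 'M[{poly C}]_n) :
  (forall i j, coef_continuous (fun w => A w i j)) ->
  coef_continuous (fun w => \det (A w)).
Proof.
move=> cA; rewrite /determinant; apply: coef_continuous_sum => s.
apply: coef_continuousM; first exact: coef_continuous_cst.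
by apply: coef_continuous_prod => i; exact: cA.
Qed.

Lemma coef_continuous_char_poly n (A : T -> 'M[C]_n) :
  continuous A -> coef_continuous (fun w => char_poly (A w)).
Proof.
move=> cA; apply: coef_continuous_det => i j.
under eq_fun do rewrite !mxE.
apply: coef_continuousD; first exact: coef_continuous_cst.
apply/coef_continuousN/coef_continuousC => w.
exact: (continuous_comp (cA w) (@coord_continuous C _ _ i j (A w))).
Qed.

Lemma closed_eq_poly p q : coef_continuous p -> coef_continuous q ->
  closed [set w | p w = q w].
Proof.
move=> cp cq; have -> : [set w | p w = q w] = \bigcap_k [set w | (p w)`_k = (q w)`_k].
  by apply/seteqP; split => w /= pq; [move=> k _ /=; rewrite pq | apply/polyP => k; exact: pq].
by apply: closed_bigI => k _; exact: closed_eq_fun.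
Qed.

End PolyContinuity.

Section Caratheodory.
Variables (R : realType) (a b : nat).
Local Notation C := R[i].
Local Notation rdim := #|{: 'I_a * 'I_b * bool}|.

Definition mx_coord (X : 'M[C]_(a, b)) (t : 'I_a * 'I_b * bool) : R :=
  if t.2 then complex.Re (X t.1.1 t.1.2) else complex.Im (X t.1.1 t.1.2).

Lemma mx_coord_sum p (c : 'I_p -> R) (X : 'I_p -> 'M[C]_(a, b)) t :
  mx_coord (\sum_i (c i)%:C *: X i) t = \sum_i c i * mx_coord (X i) t.
Proof.
rewrite /mx_coord summxE; case: t.2.
- rewrite (raddf_sum (@complex.Re R : Rcomplex R -> R)).
  by apply: eq_bigr => i _; rewrite mxE; case: (X i _ _) => x y /=; rewrite mul0r subr0.
- rewrite (raddf_sum (@complex.Im R : Rcomplex R -> R)).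
  by apply: eq_bigr => i _; rewrite mxE; case: (X i _ _) => x y /=; rewrite mul0r addr0.
Qed.

Lemma mx_coord_eq0 X : (forall t, mx_coord X t = 0) -> X = 0.
Proof.
move=> X0; apply/matrixP => i j; rewrite mxE.
move: (X0 (i, j, true)) (X0 (i, j, false)); rewrite /mx_coord /=.
by case: (X i j) => x y /= -> ->.
Qed.

Lemma real_dependent_mx p (X : 'I_p -> 'M[C]_(a, b)) : (rdim < p)%N ->
  exists2 lam : 'I_p -> R, (exists i, lam i != 0) & \sum_i (lam i)%:C *: X i = 0.
Proof.
move=> rdim_lt_p.
pose V : 'M[R]_(p, rdim) := \matrix_(i, k) mx_coord (X i) (enum_val k).
have [v vV0 v_neq0] : exists2 v : 'rV[R]_p, v *m V = 0 & v != 0.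
  apply: contrapT => /forall2NP no_v.
  have /negP[] : ~~ row_free V.
    by rewrite /row_free neq_ltn (leq_ltn_trans (rank_leq_col V)) ?orbT.
  by apply: inj_row_free => v vV0; case: (no_v v) => // /negP/negPn/eqP.
have [i0 [j0 vj0]] : exists i0 j0, v i0 j0 != 0 by apply/matrix0Pn.
exists (v 0); first by exists j0; rewrite (ord1 i0) in vj0.
apply: mx_coord_eq0 => t; rewrite mx_coord_sum.
transitivity ((v *m V) 0 (enum_rank t)); last by rewrite vV0 mxE.
by rewrite mxE; apply: eq_bigr => i _; rewrite mxE enum_rankK.
Qed.

(* Move along a real linear dependence [lam] of the X i until a first
   coefficient vanishes; the ratio test on [c i / lam i] selects it. *)
Lemma conic_drop_term p (c : 'I_p.+1 -> R) (X : 'I_p.+1 -> 'M[C]_(a, b)) :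
  (rdim <= p)%N -> (forall i, 0 <= c i) ->
  exists (i0 : 'I_p.+1) (c' : 'I_p -> R), (forall i, 0 <= c' i) /\
    \sum_i (c i)%:C *: X i = \sum_i (c' i)%:C *: X (lift i0 i).
Proof.
move=> rdim_le_p c_ge0; have [lam [i1 lam_i1] lamX0] := real_dependent_mx X rdim_le_p.
wlog lam_gt0 : lam lam_i1 lamX0 / 0 < lam i1.
  move=> WL; case: (ltrgtP (lam i1) 0) => [lam_lt0||lam0]; last 2 first.
  - exact: WL.
  - by rewrite lam0 eqxx in lam_i1.
  apply: (WL (fun i => - lam i)); rewrite ?oppr_eq0 ?oppr_gt0 //.
  transitivity (- \sum_i (lam i)%:C *: X i); last by rewrite lamX0 oppr0.
  by rewrite -sumrN; apply: eq_bigr => i _; rewrite rmorphN scaleNr.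
case: (@arg_minP _ _ _ i1 (fun i => 0 < lam i) (fun i => c i / lam i) lam_gt0).
move=> i0 lam_i0 i0_min; pose t := c i0 / lam i0.
have t_ge0 : 0 <= t := divr_ge0 (c_ge0 i0) (ltW lam_i0).
pose c' i := c i - t * lam i.
have c'_ge0 i : 0 <= c' i.
  rewrite subr_ge0; have [lam_i_gt0|lam_i_le0] := ltP 0 (lam i).
    by rewrite -ler_pdivlMr //; exact: i0_min.
  exact: le_trans (mulr_ge0_le0 t_ge0 lam_i_le0) (c_ge0 i).
have c'_i0 : c' i0 = 0 by rewrite /c' divfK ?subrr // gt_eqF.
exists i0, (fun i => c' (lift i0 i)); split => [i|]; first exact: c'_ge0.
have -> : \sum_i (c i)%:C *: X i = \sum_i (c' i)%:C *: X i.
  transitivity (\sum_i (c i)%:C *: X i - t%:C *: \sum_i (lam i)%:C *: X i).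
    by rewrite lamX0 scaler0 subr0.
  rewrite scaler_sumr -sumrB.
  by apply: eq_bigr => i _; rewrite scalerA -rmorphM -scalerBl -rmorphB.
by rewrite (bigD1_ord i0) //= c'_i0 scale0r add0r.
Qed.

Lemma conic_pad (S : set 'M[C]_(a, b)) X0 p q (c : 'I_p -> R) X :
  S X0 -> (p <= q)%N -> (forall i, 0 <= c i) -> (forall i, S (X i)) ->
  exists (c' : 'I_q -> R) (X' : 'I_q -> 'M[C]_(a, b)),
    [/\ forall i, 0 <= c' i, forall i, S (X' i) &
        \sum_i (c i)%:C *: X i = \sum_i (c' i)%:C *: X' i].
Proof.
move=> SX0 + c_ge0 SX; elim: q => [|q IHq].
  rewrite leqn0 => /eqP p0; subst p.
  by exists c, X; split.
rewrite leq_eqVlt => /orP[/eqP p_eq | /IHq [c' [X' [c'_ge0 SX' ->]]]].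
  by subst p; exists c, X; split.
pose ext T (f : 'I_q -> T) x0 i := if unlift ord_max i is Some j then f j else x0.
exists (ext _ c' 0), (ext _ X' X0); split=> [i|i|]; rewrite /ext.
- by case: unlift.
- by case: unlift.
rewrite (bigD1_ord ord_max) //= unlift_none scale0r add0r.
by under [RHS]eq_bigr do rewrite liftK.
Qed.

Lemma caratheodory_conic (S : set 'M[C]_(a, b)) X0 p (c : 'I_p -> R) X :
  S X0 -> (forall i, 0 <= c i) -> (forall i, S (X i)) ->
  exists (c' : 'I_rdim -> R) (X' : 'I_rdim -> 'M[C]_(a, b)),
    [/\ forall i, 0 <= c' i, forall i, S (X' i) &
        \sum_i (c i)%:C *: X i = \sum_i (c' i)%:C *: X' i].
Proof.
move=> SX0; elim: p c X => [|p IHp] c X c_ge0 SX.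
  exact: conic_pad SX0 (leq0n _) c_ge0 SX.
have [rdim_le_p|p_lt_rdim] := leqP rdim p; last exact: conic_pad SX0 p_lt_rdim c_ge0 SX.
have [i0 [c' [c'_ge0 ->]]] := conic_drop_term X rdim_le_p c_ge0.
exact: IHp c'_ge0 (fun i => SX (lift i0 i)).
Qed.

End Caratheodory.

Lemma closure_nbhsI (T : topologicalType) (A U : set T) x :
  nbhs x U -> closure A x -> closure (A `&` U) x.
Proof.
move=> xU xA V xV; have [y [Ay [Uy Vy]]] := xA _ (filterI xU xV).
by exists y; split; [split|].
Qed.

Lemma continuous_Re_mxtrace (R : realType) N :
  continuous (fun X : 'M[R[i]]_N => complex.Re (\tr X)).
Proof.
have tr_cont : continuous (@mxtrace R[i] N).
  by apply: (@continuous_sum _ _ R[i]^o) => i Y; exact: coord_continuous.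
by move=> X; exact: continuous_comp (tr_cont X) (@continuous_Re _ _).
Qed.

Lemma cone_set0 (R : realType) N : cone (set0 : set 'M[R[i]]_N) = [set 0].
Proof.
apply/seteqP; split => [_ [[|p] [c [X [_ SX ->]]]] | _ ->].
- by rewrite big_ord0.
- by have := SX ord0.
- by exists 0%N, (fun=> 0), (fun=> 0); split => [//|[]//|]; rewrite big_ord0.
Qed.

Section ClosedCone.
Variables (R : realType) (N : nat) (T : topologicalType).
Local Notation C := R[i].
Local Notation rdim := #|{: 'I_N * 'I_N * bool}|.
Variables (G : T -> 'M[C]_N) (K : set T).
Hypotheses (K_compact : compact K) (G_cont : continuous G)
  (G_trace : forall x, K x -> \tr (G x) = 1).

Let tr_re (X : 'M[C]_N) := complex.Re (\tr X).

Definition conic_sum (f : 'I_rdim -> R * T) : 'M[C]_N :=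
  \sum_i ((f i).1)%:C *: G (f i).2.

Definition bounded_params (B : R) : set ('I_rdim -> R * T) :=
  [set f | forall i, (`[0, B] `*` K) (f i)].

Lemma continuous_conic_sum : continuous conic_sum.
Proof.
apply: continuous_sum => i f.
have coef_i : continuous (fun g : 'I_rdim -> R * T => (g i).1).
  by move=> g; apply: (continuous_comp (@proj_continuous _ _ i g)); exact: cvg_fst.
have point_i : continuous (fun g : 'I_rdim -> R * T => (g i).2).
  by move=> g; apply: (continuous_comp (@proj_continuous _ _ i g)); exact: cvg_snd.
exact: (continuousZ (continuous_comp (coef_i f) (@continuous_real_complex _ (f i).1))
                    (continuous_comp (point_i f) (@G_cont (f i).2))).
Qed.

Lemma compact_bounded_params B : compact (bounded_params B).
Proof. exact: tychonoff (fun=> compact_setX (@segment_compact _ 0 B) K_compact). Qed.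

Lemma closed_conic_sum_image B : closed (conic_sum @` bounded_params B).
Proof.
have := continuous_compact (continuous_subspaceT continuous_conic_sum)
  (@compact_bounded_params B).
by apply: compact_closed; exact: norm_hausdorff.
Qed.

Lemma conic_sum_image_sub_cone B : conic_sum @` bounded_params B `<=` cone (G @` K).
Proof.
move=> _ [f f_bd <-]; exists rdim, (fun i => (f i).1), (fun i => G (f i).2).
split=> // i; have [/andP[f_ge0 _] Kf] := f_bd i.
- by move: f_ge0; rewrite bnd_simp.
- by exists (f i).2.
Qed.

Lemma mxtrace_conic_comb p (c : 'I_p -> R) (X : 'I_p -> 'M[C]_N) :
  (forall i, (G @` K) (X i)) -> \tr (\sum_i (c i)%:C *: X i) = (\sum_i c i)%:C.
Proof.
move=> SX; rewrite raddf_sum rmorph_sum; apply: eq_bigr => i _.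
by have [x Kx <-] := SX i; rewrite /= mxtraceZ G_trace // mulr1.
Qed.

Lemma cone_sub_conic_sum_image B x0 : K x0 ->
  cone (G @` K) `&` [set X | tr_re X < B] `<=` conic_sum @` bounded_params B.
Proof.
move=> Kx0 _ [[p [c [X [c_ge0 SX ->]]]]].
have [c' [X' [c'_ge0 SX' ->]]] :=
  caratheodory_conic (ex_intro2 _ _ x0 Kx0 erefl) c_ge0 SX.
rewrite /= /tr_re mxtrace_conic_comb // => sum_lt_B.
have /choice[x xE] : forall i, exists x, K x /\ G x = X' i.
  by move=> i; have [x Kx GxE] := SX' i; exists x.
exists (fun i => (c' i, x i)); last by apply: eq_bigr => i _; rewrite (xE i).2.
move=> i; split; last exact: (xE i).1.
rewrite /= in_itv /= c'_ge0 /=; apply: ltW; apply: le_lt_trans sum_lt_B.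
by rewrite (bigD1 i) //= lerDl sumr_ge0.
Qed.

Theorem closed_cone_image : closed (cone (G @` K)).
Proof.
have [[x0 Kx0]|K0] := pselect (K !=set0); last first.
  have -> : K = set0 by apply/seteqP; split => // x Kx; apply: K0; exists x.
  rewrite image_set0 cone_set0; apply: compact_closed; last exact: compact_set1.
  exact: norm_hausdorff.
apply/closure_id/seteqP; split => [|M coneM]; first exact: subset_closure.
pose B := tr_re M + 1.
have near_M : \forall X \near M, tr_re X < B.
  have tr_re_cont : continuous tr_re := @continuous_Re_mxtrace R N.
  have := @cvgr_lt _ _ _ (nbhs_filter M) tr_re _ (tr_re_cont M) B.
  by rewrite ltrDl ltr01; apply.
have := closure_nbhsI near_M coneM.
move/(closure_subset (cone_sub_conic_sum_image Kx0)).
rewrite -(closure_id _).1; first exact: conic_sum_image_sub_cone.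
exact: closed_conic_sum_image.
Qed.

End ClosedCone.

Section Schmidt.
Variables (R : realType) (n m : nat).
Local Notation C := R[i].
Local Notation d := (minn n m).

Lemma unit_tensor_entry_le1 (a : 'M[C]_(n, m)) i j :
  unit_tensor a -> `|a i j| ^+ 2 <= 1.
Proof.
move=> <-; rewrite (bigD1 i) //= (bigD1 j) //= -addrA lerDl.
by rewrite addr_ge0 ?sumr_ge0 // => *; rewrite ?sumr_ge0 // => *; rewrite exprn_ge0.
Qed.

Lemma sqr_le1_itv (x : R) : x ^+ 2 <= 1 -> -1 <= x <= 1.
Proof.
move=> x2_le1; rewrite -ler_norml -(@expr_le1 _ 2) //.
by rewrite real_normK ?num_real.
Qed.

Lemma unit_tensor_mx_coord_le1 (a : 'M[C]_(n, m)) t :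
  unit_tensor a -> -1 <= mx_coord a t <= 1.
Proof.
case: t => -[i j] b /(unit_tensor_entry_le1 i j); rewrite -add_Re2_Im2 lecR.
have := sqr_ge0 (complex.Re (a i j)); have := sqr_ge0 (complex.Im (a i j)).
by rewrite /mx_coord; case: b => /= *; apply: sqr_le1_itv; lra.
Qed.

Lemma mxtrace_outer (a : 'M[C]_(n, m)) :
  \tr (outer a) = \sum_i \sum_j `|a i j| ^+ 2.
Proof.
rewrite /mxtrace (reindex (uncurry (@mxvec_index n m))) /=; last exact: curry_mxvec_bij.
rewrite pair_big; apply: eq_bigr => -[i j] _ /=.
by rewrite !mxE big_ord1 !mxE mxvecE normCK.
Qed.

Lemma mxtrace_mulmx_adjoint (a : 'M[C]_(n, m)) :
  \tr (a *m (map_mx Num.conj a)^T) = \sum_i \sum_j `|a i j| ^+ 2.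
Proof.
by apply: eq_bigr => i _; rewrite !mxE; apply: eq_bigr => j _; rewrite !mxE normCK.
Qed.

Lemma sum_schmidt_sqr (a : 'M[C]_(n, m)) s : (0 < d)%N ->
  unit_tensor a -> schmidt_coeffs a s -> \sum_j s j ^+ 2 = 1.
Proof.
move=> d_gt0 a_unit [_ _ char_a].
have n_gt0 : (0 < n)%N by move: d_gt0; rewrite leq_min => /andP[].
(* Compare the coefficients of 'X^n.-1, i.e. minus the traces. *)
have := char_poly_trace (a *m (map_mx Num.conj a)^T) n_gt0.
rewrite mxtrace_mulmx_adjoint a_unit char_a coefMXn ifN; last by rewrite -leqNgt; lia.
have -> : (n.-1 - (n - d) = d.-1)%N by lia.
pose sq := [seq (s j ^+ 2)%:C | j <- enum 'I_d].
have sq_size : size sq = d by rewrite size_map size_enum_ord.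
rewrite (_ : \prod_(j < d) _ = \prod_(z <- sq) ('X - z%:P)); last by rewrite big_map big_enum.
rewrite -{1}sq_size coefPn_prod_XsubC ?sq_size -?lt0n // big_map big_enum /=.
by move/oppr_inj; rewrite -rmorph_sum => /complexI.
Qed.

Lemma schmidt_coeff_le1 (a : 'M[C]_(n, m)) s j :
  unit_tensor a -> schmidt_coeffs a s -> 0 <= s j <= 1.
Proof.
move=> a_unit a_s; have [s_ge0 _ _] := a_s; rewrite s_ge0 -(@expr_le1 _ 2) //=.
rewrite -(sum_schmidt_sqr _ a_unit a_s); last exact: leq_ltn_trans (ltn_ord j).
by rewrite (bigD1 j) //= lerDl sumr_ge0 // => *; rewrite sqr_ge0.
Qed.

End Schmidt.

Section Admissible.
Variables (R : realType) (n m : nat) (alpha : R).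
Local Notation C := R[i].
Local Notation d := (minn n m).

Definition schmidt_admissible (a : 'M[C]_(n, m)) (s : 'I_d -> R) : Prop :=
  let k := Num.truncn alpha in
  let theta := alpha - k%:R in
  [/\ schmidt_coeffs a s,
      forall j : 'I_d, (Num.ceil alpha <= (j : nat)%:Z)%R -> s j = 0 &
      0 < theta -> forall j : 'I_d, (j : nat) = k ->
        s j <= theta / k%:R * \sum_(i < d | (i < k)%N) s i].

Lemma admissibleE a :
  admissible alpha a <-> unit_tensor a /\ exists s, schmidt_admissible a s.
Proof. by []. Qed.

Section Closedness.
Variables (T : topologicalType) (A : T -> 'M[C]_(n, m)) (s : T -> 'I_d -> R).
Hypotheses (A_cont : continuous A) (s_cont : forall j, continuous (fun w => s w j)).

Let entry_cont i j : continuous (fun w => A w i j).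
Proof. by move=> w; exact: continuous_comp (@A_cont w) (@coord_continuous C _ _ i j (A w)). Qed.

Lemma closed_unit_tensor : closed [set w | unit_tensor (A w)].
Proof.
apply: closed_eq_fun => [w|w]; last exact: cvg_cst.
apply: (@continuous_sum _ _ C^o) => i {}w; apply: (@continuous_sum _ _ C^o) => j {}w.
have norm_cont := continuous_comp (@entry_cont i j w) (@norm_continuous _ C^o _).
exact: (continuousM norm_cont norm_cont).
Qed.

Lemma closed_schmidt_coeffs : closed [set w | schmidt_coeffs (A w) (s w)].
Proof.
have gram_cont : continuous (fun w => A w *m (map_mx Num.conj (A w))^T).
  apply: continuous_mx => i j; under eq_fun do rewrite !mxE.
  apply: (@continuous_sum _ _ C^o) => k w; under eq_fun do rewrite !mxE.
  exact: continuousM (@entry_cont i k w)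
    (continuous_comp (@entry_cont j k w) (@continuous_conjc _ _)).
have sq_cont j : continuous (fun w => s w j ^+ 2 +i* 0).
  apply: continuous_complex => [w|w]; last exact: cvg_cst.
  exact: (continuousM (@s_cont j w) (@s_cont j w)).
rewrite (_ : [set w | _] = [set w | forall j, 0 <= s w j] `&`
    [set w | forall i j : 'I_d, (i <= j)%N -> s w j <= s w i] `&`
    [set w | char_poly (A w *m (map_mx Num.conj (A w))^T) =
      \prod_(j < d) ('X - (s w j ^+ 2 +i* 0)%:P) * 'X^(n - d)]); last first.
  by apply/seteqP; split=> w /=; [case=> *; split; [split|] | case=> -[] *; split].
apply: closedI; first apply: closedI.
- by apply: closed_forall => j; apply: closed_le_fun => // w; exact: cvg_cst.
- apply: closed_forall => i; apply: closed_forall => j; apply: closed_implies.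
  exact: closed_le_fun.
- apply: closed_eq_poly; first exact: coef_continuous_char_poly.
  apply: coef_continuousM; last exact: coef_continuous_cst.
  apply: coef_continuous_prod => j; apply: coef_continuousD; first exact: coef_continuous_cst.
  exact/coef_continuousN/coef_continuousC.
Qed.

Lemma closed_admissible :
  closed [set w | unit_tensor (A w) /\ schmidt_admissible (A w) (s w)].
Proof.
pose k := Num.truncn alpha; pose theta := alpha - k%:R.
rewrite (_ : [set w | _] = [set w | unit_tensor (A w)] `&`
    [set w | schmidt_coeffs (A w) (s w)] `&`
    [set w | forall j : 'I_d, (Num.ceil alpha <= (j : nat)%:Z)%R -> s w j = 0] `&`
    [set w | 0 < theta -> forall j : 'I_d, (j : nat) = k ->
        s w j <= theta / k%:R * \sum_(i < d | (i < k)%N) s w i]); last first.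
  apply/seteqP; split=> w /=; first by case=> ? [] *; split; [split; [split|]|].
  by case=> -[[? ?] ?] ?; split; [|split].
apply: closedI; first apply: closedI; first apply: closedI.
- exact: closed_unit_tensor.
- exact: closed_schmidt_coeffs.
- apply: closed_forall => j; apply: closed_implies.
  by apply: closed_eq_fun => // w; exact: cvg_cst.
- apply: closed_implies; apply: closed_forall => j; apply: closed_implies.
  have sum_cont : continuous (fun w => \sum_(i < d | (i < k)%N) s w i).
    by apply: (@continuous_sum _ _ R^o) => i; exact: s_cont.
  by apply: closed_le_fun => // w; exact: (continuousM (cvg_cst _) (sum_cont w)).
Qed.

End Closedness.
End Admissible.

Lemma continuous_outer (R : realType) n m : continuous (@outer R n m).
Proof.
apply: continuous_mx => k l; under eq_fun do rewrite !mxE big_ord1 !mxE.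
have vec_cont k' : continuous (fun a : 'M[R[i]]_(n, m) => mxvec a 0 k').
  case/mxvec_indexP: k' => i j a; under eq_fun do rewrite mxvecE.
  exact: coord_continuous.
move=> a; exact: continuousM (vec_cont k a)
  (continuous_comp (vec_cont l a) (@continuous_conjc _ _)).
Qed.

Section Parametrization.
Variables (R : realType) (n m : nat) (alpha : R).
Local Notation C := R[i].
Local Notation d := (minn n m).

(* Real and imaginary parts of the entries of x, followed by its Schmidt
   coefficients, which are thereby made part of the parameters so that the
   existential in the definition of admissibility becomes a closed condition. *)
Definition param_index := ('I_n * 'I_m * bool + 'I_d)%type.

Definition mx_of_params (w : param_index -> R) : 'M[C]_(n, m) :=
  \matrix_(i, j) (w (inl (i, j, true)) +i* w (inl (i, j, false))).

Definition sv_of_params (w : param_index -> R) : 'I_d -> R := fun j => w (inr j).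

Definition params_of (a : 'M[C]_(n, m)) (s : 'I_d -> R) (x : param_index) : R :=
  match x with inl t => mx_coord a t | inr j => s j end.

Lemma mx_of_paramsK a s : mx_of_params (params_of a s) = a.
Proof. by apply/matrixP => i j; rewrite mxE /= /mx_coord /=; case: (a i j). Qed.

Definition admissible_params : set (param_index -> R) :=
  [set w | forall x, `[-1, 1] (w x)] `&`
  [set w | unit_tensor (mx_of_params w) /\
           schmidt_admissible alpha (mx_of_params w) (sv_of_params w)].

Lemma continuous_mx_of_params : continuous mx_of_params.
Proof.
apply: continuous_mx => i j.
rewrite (_ : (fun w => _) = fun w => w (inl (i, j, true)) +i* w (inl (i, j, false))).
  by apply: continuous_complex; exact: proj_continuous.
by apply: funext => w; rewrite mxE.
Qed.

Lemma compact_admissible_params : compact admissible_params.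
Proof.
apply: compact_closedI; first exact: tychonoff (fun=> @segment_compact _ (-1) 1).
apply: closed_admissible; first exact: continuous_mx_of_params.
by move=> j; exact: proj_continuous.
Qed.

Lemma S_alpha_image :
  S_alpha alpha = (@outer R n m \o mx_of_params) @` admissible_params.
Proof.
apply/seteqP; split=> M [a]; last first.
  move=> [_ [a_unit a_adm]] <-; exists (mx_of_params a) => //.
  by split=> //; exists (sv_of_params a).
move=> /admissibleE[a_unit [s sa]] <-; have [a_s _ _] := sa.
exists (params_of a s); last by rewrite /= mx_of_paramsK.
rewrite /admissible_params /= mx_of_paramsK; split=> [[t|j]|//] /=; rewrite in_itv /=.
  exact: unit_tensor_mx_coord_le1.
have /andP[s_ge0 s_le1] := schmidt_coeff_le1 j a_unit a_s.
by rewrite s_le1 (le_trans _ s_ge0) // lerN10.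
Qed.

Lemma continuous_outer_params : continuous (@outer R n m \o mx_of_params).
Proof.
by move=> w; exact: continuous_comp (@continuous_mx_of_params w) (@continuous_outer R n m _).
Qed.

Lemma mxtrace_outer_params w : admissible_params w -> \tr (outer (mx_of_params w)) = 1.
Proof. by case=> _ [w_unit _]; rewrite mxtrace_outer. Qed.

End Parametrization.

Theorem corollary3p6 (R : realType) (n m : nat) (alpha : R) :
  1 <= alpha -> alpha <= (minn n m)%:R ->
  @K_alpha R n m alpha = cone (@S_alpha R n m alpha).
Proof.
move=> _ _; apply/esym/closure_id; rewrite S_alpha_image.
apply: closed_cone_image.
- exact: compact_admissible_params.
- exact: continuous_outer_params.
- exact: mxtrace_outer_params.
Qed.
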